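(* Let $R$ be an entire commutative semiring. Then the Markov category $\mathsf{Kl}(D_R)$ is positive if and only if $R$ is zerosumfree.
   Context: A commutative semiring $R$ is entire if $0\neq 1$ and $rs=0$ implies $r=0$ or $s=0$; it is zerosumfree if $r+s=0$ implies $r=s=0$. The Markov category $\mathsf{Kl}(D_R)$ has sets as objects; a morphism $f\colon A\to X$ assigns to each $a\in A$ a finitely supported function $f(\cdot\mid a)\colon X\to R$ with $\sum_x f(x\mid a)=1$; composition $(g\circ f)(y\mid a)=\sum_x g(y\mid x)f(x\mid a)$; tensor product is the cartesian product with $(f\otimes g)(x,y\mid a,b)=f(x\mid a)g(y\mid b)$; $\mathrm{copy}_X(x_1,x_2\mid x)=\delta_x(x_1)\delta_x(x_2)$; $\mathrm{del}_X$ is the unique morphism to the singleton. A morphism $f\colon A\to X$ is deterministic if $\mathrm{copy}_X\circ f=(f\otimes f)\circ\mathrm{copy}_A$. A Markov category is positive if for all $f\colon X\to Y$, $g\colon Y\to Z$ with $g\circ f$ deterministic, $(\mathrm{id}_Y\otimes g)\circ\mathrm{copy}_Y\circ f=(f\otimes (g\circ f))\circ\mathrm{copy}_X$. *)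

From HB Require Import structures.
From mathcomp Require Import all_boot all_order all_algebra.
From mathcomp Require Import boolp classical_sets functions cardinality fsbigop.
Set Implicit Arguments. Unset Strict Implicit. Unset Printing Implicit Defensive.
Import Order.TTheory GRing.Theory.
Local Open Scope classical_set_scope.
Local Open Scope ring_scope.

(* Objects: sets, represented by choiceTypes.
   A morphism f : A -> X is represented by a function f : A -> X -> R,
   with f a x = f(x | a), which is a morphism when every f a is finitely
   supported and sums to 1. *)

Section KlDR.
Variable R : comPzSemiRingType.

Definition entire : Prop :=
  (0 != 1 :> R) /\ (forall r s : R, r * s = 0 -> r = 0 \/ s = 0).

Definition zerosumfree : Prop :=
  forall r s : R, r + s = 0 -> r = 0 /\ s = 0.

Definition fin_supp (X : choiceType) (p : X -> R) : Prop :=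
  finite_set [set x | p x != 0].

Definition fsum (X : choiceType) (p : X -> R) : R := \sum_(x \in [set: X]) p x.

Definition is_kernel (A X : choiceType) (f : A -> X -> R) : Prop :=
  forall a, fin_supp (f a) /\ fsum (f a) = 1.

Definition delta (X : choiceType) (x y : X) : R := if y == x then 1 else 0.

Definition kid (X : choiceType) : X -> X -> R := @delta X.

Definition kcomp (A X Y : choiceType) (g : X -> Y -> R) (f : A -> X -> R)
  : A -> Y -> R := fun a y => fsum (fun x => g x y * f a x).

Definition ktensor (A B X Y : choiceType) (f : A -> X -> R) (g : B -> Y -> R)
  : (A * B)%type -> (X * Y)%type -> R :=
  fun ab xy => f ab.1 xy.1 * g ab.2 xy.2.

Definition kcopy (X : choiceType) : X -> (X * X)%type -> R :=
  fun x xx => delta x xx.1 * delta x xx.2.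

Definition deterministic (A X : choiceType) (f : A -> X -> R) : Prop :=
  kcomp (@kcopy X) f = kcomp (ktensor f f) (@kcopy A).

Definition positive : Prop :=
  forall (X Y Z : choiceType) (f : X -> Y -> R) (g : Y -> Z -> R),
    is_kernel f -> is_kernel g ->
    deterministic (kcomp g f) ->
    kcomp (ktensor (@kid Y) g) (kcomp (@kcopy Y) f)
    = kcomp (ktensor f (kcomp g f)) (@kcopy X).

End KlDR.

From mathcomp Require Import all_boot all_order all_algebra.
From mathcomp Require Import boolp classical_sets cardinality fsbigop finmap.
Set Implicit Arguments. Unset Strict Implicit. Unset Printing Implicit Defensive.
Import GRing.Theory.
Local Open Scope classical_set_scope.
Local Open Scope ring_scope.

(** If [R] is entire, determinism of [g o f] makes each [(g o f)(.|x)] supported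
   in at most one point [z]; if [R] is also zerosumfree, the vanishing sums
   [(g o f)(z'|x) = sum_y g(z'|y) f(y|x)] for [z' <> z] force [g(.|y)] to be the
   point mass at [z] for every [y] charged by [f(.|x)], which is positivity.
   Conversely, over any [R], if [r + s = 0] then
   [f = delta_None + r delta_(Some true) + s delta_(Some false)] is a distribution,
   and [g] sending [None] to [true] and [Some _] to [false] gives
   [g o f = delta_true]; positivity at [(Some true, false)] reads [r = r * 0]. *)

Section KleisliFacts.
Variable R : comPzSemiRingType.

Lemma fsum_seq (X : choiceType) (r : seq X) (p : X -> R) :
  uniq r -> (forall x, x \in r) -> fsum p = \sum_(x <- r) p x.
Proof.
move=> r_uniq r_full; rewrite /fsum (fsbig_fwiden r) //.
  by move=> x _; apply: r_full.
by move=> x [_ /(_ I)].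
Qed.

Lemma fsum_single (X : choiceType) (p : X -> R) x0 :
  (forall x, x != x0 -> p x = 0) -> fsum p = p x0.
Proof.
move=> p0; rewrite /fsum -(fsbig_widen [set x0]) ?fsbig_set1 //.
by move=> x [_ /= /eqP]; apply: p0.
Qed.

Lemma zerosumfree_sum_eq0 (I : eqType) (s : seq I) (F : I -> R) :
  zerosumfree R -> \sum_(i <- s) F i = 0 -> forall i, i \in s -> F i = 0.
Proof.
move=> zsf; elim: s => [|a s IHs] //; rewrite big_cons => /zsf [Fa0 /IHs Fs0] i.
by rewrite inE => /predU1P [-> | /Fs0].
Qed.

Lemma zerosumfree_fsum_eq0 (X : choiceType) (p : X -> R) :
  zerosumfree R -> fin_supp p -> fsum p = 0 -> forall x, p x = 0.
Proof.
move=> zsf p_fin; rewrite /fsum; case: finite_supportP => [|S _ p0 _ S0 x].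
  by rewrite setTI => p_inf; case: p_inf; apply: sub_finite_set p_fin => x /= /eqP.
by have [/(zerosumfree_sum_eq0 zsf S0) | /p0] := boolP (x \in S); apply.
Qed.

Lemma kcomp_kcopyl (A X : choiceType) (f : A -> X -> R) a x1 x2 :
  kcomp (@kcopy R X) f a (x1, x2) = if x2 == x1 then f a x1 else 0.
Proof.
rewrite /kcomp (fsum_single (x0 := x1)) /kcopy /delta /= ?eqxx ?mul1r.
  by case: ifP; rewrite ?mul1r ?mul0r.
by move=> x /negbTE; rewrite eq_sym => ->; rewrite !mul0r.
Qed.

Lemma kcomp_kcopyr (A Y : choiceType) (h : (A * A)%type -> Y -> R) a y :
  kcomp h (@kcopy R A) a y = h (a, a) y.
Proof.
rewrite /kcomp (fsum_single (x0 := (a, a))) /kcopy /delta /= ?eqxx ?mulr1 //.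
case=> u v /= uv_neq; case: eqP => [u_eq|]; last by rewrite !mul0r mulr0.
by case: eqP => [v_eq|]; [rewrite u_eq v_eq eqxx in uv_neq | rewrite !mulr0].
Qed.

Lemma deterministicE (A X : choiceType) (h : A -> X -> R) :
  deterministic h <->
  forall a x1 x2, h a x1 * h a x2 = if x2 == x1 then h a x1 else 0.
Proof.
split=> [h_det a x1 x2 | h_det].
  by have := congr1 (fun k => k a (x1, x2)) h_det; rewrite kcomp_kcopyl kcomp_kcopyr.
apply/funext => a; apply/funext => -[x1 x2].
by rewrite kcomp_kcopyl kcomp_kcopyr /ktensor h_det.
Qed.

Lemma deterministic_delta (A X : choiceType) (phi : A -> X) :
  deterministic (fun a => @delta R X (phi a)).
Proof.
apply/deterministicE => a x1 x2; rewrite /delta.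
have [->|x21] := eqVneq x2 x1; first by case: (_ == _); rewrite ?mulr1 ?mulr0.
by case: eqP => [<-|]; rewrite ?(negbTE x21) ?mulr0 ?mul0r.
Qed.

Lemma deterministic_point_mass (A X : choiceType) (h : A -> X -> R) a x x' :
  entire R -> deterministic h -> h a x != 0 -> x' != x -> h a x' = 0.
Proof.
move=> [_ R_entire] /deterministicE h_det hx_neq0 /negbTE x'x.
have := h_det a x x'; rewrite x'x => /R_entire[hx0 | //].
by rewrite hx0 eqxx in hx_neq0.
Qed.

Lemma kcomp_tensor_kid_copy (X Y Z : choiceType) (f : X -> Y -> R)
    (g : Y -> Z -> R) x y z :
  kcomp (ktensor (@kid R Y) g) (kcomp (@kcopy R Y) f) x (y, z) = f x y * g y z.
Proof.
have := kcomp_kcopyl f x; set K := kcomp _ f => KE.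
rewrite /kcomp (fsum_single (x0 := (y, y))).
  by rewrite KE eqxx /ktensor /kid /delta eqxx mul1r mulrC.
case=> u v /= uv_neq; rewrite KE /ktensor /kid /delta /=.
case: eqP => [yu|]; last by rewrite !mul0r.
by case: eqP => [vu|]; [rewrite vu -yu eqxx in uv_neq | rewrite mulr0].
Qed.

Lemma positiveE :
  positive R <->
  forall (X Y Z : choiceType) (f : X -> Y -> R) (g : Y -> Z -> R),
    is_kernel f -> is_kernel g -> deterministic (kcomp g f) ->
    forall x y z, f x y * g y z = f x y * kcomp g f x z.
Proof.
split=> [pos X Y Z f g f_ker g_ker gf_det x y z | pos X Y Z f g f_ker g_ker gf_det].
  have := congr1 (fun k => k x (y, z)) (pos X Y Z f g f_ker g_ker gf_det).
  by rewrite kcomp_tensor_kid_copy kcomp_kcopyr.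
apply/funext => x; apply/funext => -[y z].
by rewrite kcomp_tensor_kid_copy kcomp_kcopyr; apply: pos.
Qed.

Section ZerosumfreePositive.
Hypotheses (R_entire : entire R) (R_zsf : zerosumfree R).
Variables (X Y Z : choiceType) (f : X -> Y -> R) (g : Y -> Z -> R).
Hypotheses (f_ker : is_kernel f) (g_ker : is_kernel g).
Hypothesis gf_det : deterministic (kcomp g f).

Lemma kcomp_eq0_kernel_eq0 x y z : f x y != 0 -> kcomp g f x z = 0 -> g y z = 0.
Proof.
move=> fxy_neq0 gfxz0.
have summand_fin : fin_supp (fun y' => g y' z * f x y').
  apply: sub_finite_set (proj1 (f_ker x)) => y' /=.
  by apply: contra => /eqP ->; rewrite mulr0.
have /R_entire.2[//|fxy0] := zerosumfree_fsum_eq0 R_zsf summand_fin gfxz0 y.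
by rewrite fxy0 eqxx in fxy_neq0.
Qed.

Lemma kcomp_neq0_kernel_eq1 x y z : kcomp g f x z != 0 -> f x y != 0 -> g y z = 1.
Proof.
move=> gfxz_neq0 fxy_neq0; rewrite -(proj2 (g_ker y)); apply/esym/fsum_single.
move=> z' z'z; apply: kcomp_eq0_kernel_eq0 fxy_neq0 _.
exact: deterministic_point_mass R_entire gf_det gfxz_neq0 z'z.
Qed.

Lemma kcomp_neq0_eq1 x z : kcomp g f x z != 0 -> kcomp g f x z = 1.
Proof.
move=> gfxz_neq0; rewrite -(proj2 (f_ker x)) /kcomp; congr fsum; apply/funext => y.
by have [->|/(kcomp_neq0_kernel_eq1 gfxz_neq0) ->] := eqVneq (f x y) 0;
  rewrite ?mulr0 ?mul1r.
Qed.

Lemma positivity_zerosumfree x y z : f x y * g y z = f x y * kcomp g f x z.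
Proof.
have [->|fxy_neq0] := eqVneq (f x y) 0; first by rewrite !mul0r.
have [gfxz0|gfxz_neq0] := eqVneq (kcomp g f x z) 0.
  by rewrite gfxz0 (kcomp_eq0_kernel_eq0 fxy_neq0 gfxz0).
by rewrite (kcomp_neq0_eq1 gfxz_neq0) (kcomp_neq0_kernel_eq1 gfxz_neq0 fxy_neq0).
Qed.

End ZerosumfreePositive.

Lemma positive_addr_eq0 (r s : R) : positive R -> r + s = 0 -> r = 0.
Proof.
move=> /positiveE pos rs0.
pose f (_ : unit) (y : option bool) : R :=
  match y with None => 1 | Some true => r | Some false => s end.
pose g (y : option bool) : bool -> R := delta R (y == None).
have fsum_option (p : option bool -> R) :
    fsum p = p None + (p (Some true) + p (Some false)).
  rewrite (fsum_seq (r := [:: None; Some true; Some false])) //; last by case=> [[]|].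
  by rewrite !big_cons big_nil addr0.
have fsum_bool (p : bool -> R) : fsum p = p true + p false.
  by rewrite (fsum_seq (r := [:: true; false])) ?big_cons ?big_nil ?addr0 //; case.
have f_ker : is_kernel f.
  by move=> a; split; [exact: finite_finset | rewrite fsum_option rs0 addr0].
have g_ker : is_kernel g.
  move=> y; split; first exact: finite_finset.
  by rewrite fsum_bool /g /delta; case: (y == None); rewrite ?addr0 ?add0r.
have gfE : kcomp g f = fun _ => delta R true.
  apply/funext => -[]; apply/funext => z; rewrite /kcomp fsum_option /g /f /delta.
  by case: z => /=; rewrite ?mul1r ?mul0r ?add0r ?addr0 // -mulrDr rs0 mulr0.
have := pos _ _ _ f g f_ker g_ker _ tt (Some true) false.
by rewrite gfE /g /delta /= mulr1 mulr0; apply; apply: deterministic_delta.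
Qed.

End KleisliFacts.

Theorem proposition2p12 (R : comPzSemiRingType) :
  entire R -> (positive R <-> zerosumfree R).
Proof.
move=> R_entire; split=> [pos r s rs0 | zsf].
  split; first exact: positive_addr_eq0 pos rs0.
  by rewrite addrC in rs0; apply: positive_addr_eq0 pos rs0.
by apply/positiveE => X Y Z f g f_ker g_ker gf_det x y z;
  apply: positivity_zerosumfree.
Qed.
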